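(* Let $(\mathbf x_1,y_1),\dots,(\mathbf x_n,y_n)$ be observations with $y_i\in\mathbb R$ and $\mathbf x_i\in\mathbb R^p$. Let $H$ be a set of real-valued functions on $\mathbb R^p$ (base learners) and let $$\Omega=\{(f(\mathbf x_1),\dots,f(\mathbf x_n))^\top : f\in \operatorname{span}(H)\}\subseteq\mathbb R^n .$$ Let $s(y,f)$ be a loss such that for each $y$ the map $f\mapsto s(y,f)$ is convex on $\mathbb R$, and let $g$ be a function such that $\ell=g\circ s$ belongs to the CC-family (see context); assume in addition that $g$ is bounded below on its domain. For $\mathbf f=(f_1,\dots,f_n)^\top\in\Omega$ put $$\rho(\mathbf f)=\sum_{i=1}^n g\bigl(s(y_i,f_i)\bigr).$$ Given a starting point $\mathbf f^{(0)}\in\Omega$, generate $\mathbf f^{(1)},\mathbf f^{(2)},\dots$ as follows: for $k=1,2,\dots$, 1. compute $z_i=s(y_i,f^{(k-1)}_i)$, $i=1,\dots,n$; 2. choose $v_i^{(k)}\in\partial(-g)(z_i)$, $i=1,\dots,n$ (the subdifferential of the convex function $-g$ at $z_i$); 3. set $\mathbf f^{(k)}\in\arg\min_{\mathbf f\in\Omega}\sum_{i=1}^n s(y_i,f_i)\,(-v_i^{(k)})$ (a minimizer is assumed to exist at every step). Then the sequence $\rho(\mathbf f^{(k)})$, $k=0,1,2,\dots$, is nonincreasing and converges.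
   Context: CC-family (concave convex family): a loss $\ell=g\circ s$, i.e. $\ell(y,f)=g(s(y,f))$, where (i) $g$ is a nondecreasing closed concave function whose domain contains the range of $s$; (ii) for every $z$ in the range of $s$, the subdifferential $\partial(-g)(z)$ is nonempty and bounded; (iii) $s$ is convex (in its second argument $f$). Here $\partial(-g)(z)$ denotes the subdifferential of the convex function $-g$ at $z$, which equals $\{-g'(z)\}$ when $g$ is differentiable at $z$. Examples of $g$ include $g(z)=\min(\sigma,z)$ and $g(z)=\sigma^2(1-\exp(-z/\sigma^2))$ for $z\ge 0$, $\sigma>0$; examples of $s$ include the squared loss and negative log-likelihoods of exponential-family models. *)

From mathcomp Require Import all_boot all_order all_algebra.
From mathcomp Require Import all_classical all_reals all_analysis.
Set Implicit Arguments. Unset Strict Implicit. Unset Printing Implicit Defensive.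
Import Order.TTheory GRing.Theory Num.Theory.
Import numFieldNormedType.Exports.
Local Open Scope classical_set_scope.
Local Open Scope ring_scope.

Section Defs.
Variable R : realType.

Definition convex_dom (D : set R) : Prop :=
  forall x y t, D x -> D y -> 0 <= t <= 1 -> D (t * x + (1 - t) * y).

Definition concave_on (D : set R) (g : R -> R) : Prop :=
  convex_dom D /\
  forall x y t, D x -> D y -> 0 <= t <= 1 ->
    t * g x + (1 - t) * g y <= g (t * x + (1 - t) * y).

Definition nondecreasing_on (D : set R) (g : R -> R) : Prop :=
  forall x y, D x -> D y -> x <= y -> g x <= g y.

(* closed concave: the hypograph {(z,t) | z in D, t <= g z} is closed
   (g is viewed as -oo outside D) *)
Definition closed_hypo (D : set R) (g : R -> R) : Prop :=
  closed [set zt : R * R | D zt.1 /\ zt.2 <= g zt.1].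

(* subdifferential of the convex function -g (= +oo outside D) at z *)
Definition subdiff_neg (D : set R) (g : R -> R) (z : R) : set R :=
  [set v | forall w, D w -> - g z + v * (w - z) <= - g w].

Definition convex_fun (h : R -> R) : Prop :=
  forall x y t, 0 <= t <= 1 -> h (t * x + (1 - t) * y) <= t * h x + (1 - t) * h y.

Definition CC_family (D : set R) (g : R -> R) (s : R -> R -> R) : Prop :=
  [/\ concave_on D g, nondecreasing_on D g, closed_hypo D g,
      (forall y f, D (s y f)) /\
      (forall y f, let z := s y f in
         (exists v, subdiff_neg D g z v) /\
         (exists M, forall v, subdiff_neg D g z v -> `|v| <= M)) &
      (forall y, convex_fun (s y))].

Definition in_span (p : nat) (H : set ('rV[R]_p -> R)) (f : 'rV[R]_p -> R) : Prop :=
  exists (m : nat) (c : 'I_m -> R) (h : 'I_m -> 'rV[R]_p -> R),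
    (forall j, H (h j)) /\ f = (fun x => \sum_(j < m) c j * h j x).

Definition Omega (n p : nat) (x : 'I_n -> 'rV[R]_p) (H : set ('rV[R]_p -> R)) :
  set ('I_n -> R) :=
  [set fv | exists f, in_span H f /\ forall i, fv i = f (x i)].

Definition rho (n : nat) (g : R -> R) (s : R -> R -> R) (y : 'I_n -> R)
  (fv : 'I_n -> R) : R := \sum_(i < n) g (s (y i) (fv i)).

End Defs.

From mathcomp Require Import all_boot all_order all_algebra.
From mathcomp Require Import all_classical all_reals all_analysis.
From mathcomp Require Import lra.
Set Implicit Arguments. Unset Strict Implicit. Unset Printing Implicit Defensive.
Import Order.TTheory GRing.Theory Num.Theory.
Import numFieldNormedType.Exports.
Local Open Scope classical_set_scope.
Local Open Scope ring_scope.

(* The iteration is a majorization-minimization scheme.  If v is a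
   subgradient of -g at z, concavity of g gives the linear majorant
   g w <= g z - v (w - z) for every w in the domain.  Summing these majorants
   at z_i = s(y_i, f_i) bounds rho(f') by rho(f) plus the change of the
   weighted objective sum_i s(y_i, .) (-v_i), which the minimization step
   makes nonpositive when f = F k and f' = F (k+1): hence rho(F k) is
   nonincreasing.  Since g is bounded below by m, rho is bounded below by
   n m, and a nonincreasing sequence bounded below converges.
   Only the facts that s takes values in the domain of g and that the v_i
   are subgradients are used from the CC-family assumptions. *)

Section MajorizeMinimize.
Variables (R : realType) (n : nat) (D : set R) (g : R -> R) (s : R -> R -> R).
Variable y : 'I_n -> R.

Lemma subdiff_neg_majorant (z u w : R) :
  subdiff_neg D g z u -> D w -> g w <= g z - u * (w - z).
Proof. by move=> /(_ w) hu /hu; lra. Qed.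

Lemma rho_majorant (f' f v : 'I_n -> R) :
  (forall y0 t, D (s y0 t)) ->
  (forall i, subdiff_neg D g (s (y i) (f i)) (v i)) ->
  rho g s y f' <= rho g s y f +
    (\sum_(i < n) s (y i) (f' i) * (- v i) - \sum_(i < n) s (y i) (f i) * (- v i)).
Proof.
move=> sD hv; rewrite /rho -sumrB -big_split /=; apply: ler_sum => i _.
have := subdiff_neg_majorant (hv i) (sD (y i) (f' i)); lra.
Qed.

Lemma rho_lower_bound (m : R) (f : 'I_n -> R) :
  (forall y0 t, D (s y0 t)) -> (forall z, D z -> m <= g z) ->
  m *+ n <= rho g s y f.
Proof.
move=> sD hm; rewrite /rho -[X in m *+ X](card_ord n) -sumr_const.
by apply: ler_sum => i _; apply: hm.
Qed.

End MajorizeMinimize.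

Theorem theorem1 (R : realType) (n p : nat) (x : 'I_n -> 'rV[R]_p) (y : 'I_n -> R)
  (H : set ('rV[R]_p -> R)) (D : set R) (g : R -> R) (s : R -> R -> R)
  (F : nat -> 'I_n -> R) (v : nat -> 'I_n -> R) :
  CC_family D g s ->
  (exists m : R, forall z, D z -> m <= g z) ->
  Omega x H (F 0%N) ->
  (forall k i, subdiff_neg D g (s (y i) (F k i)) (v k.+1 i)) ->
  (forall k, Omega x H (F k.+1) /\
     forall fv, Omega x H fv ->
       \sum_(i < n) s (y i) (F k.+1 i) * (- v k.+1 i)
       <= \sum_(i < n) s (y i) (fv i) * (- v k.+1 i)) ->
  (forall k, rho g s y (F k.+1) <= rho g s y (F k)) /\
  cvg ((fun k => rho g s y (F k)) @ \oo).
Proof.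
move=> [_ _ _ [sD _] _] [m hm] hF0 hsub hmin.
(* Every iterate is feasible, so F k competes in the (k+1)-th minimization. *)
have feasible k : Omega x H (F k) by case: k => [|k] //; case: (hmin k).
have decrease k : rho g s y (F k.+1) <= rho g s y (F k).
  have descent := (hmin k).2 _ (feasible k).
  apply: le_trans (rho_majorant (F k.+1) sD (hsub k)) _.
  by rewrite gerDl subr_le0.
split=> //; apply: nonincreasing_is_cvgn.
  exact/nonincreasing_seqP.
by exists (m *+ n) => _ [k _ <-]; apply: rho_lower_bound sD hm.
Qed.
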